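(* Let $(A,\mathfrak m)$ be a local integral domain which is not a valuation domain, let $E := A/\mathfrak m$, and let $B := A \ltimes E$ be the trivial ring extension of $A$ by $E$. Let $f : A \to B$ be the ring homomorphism $f(a) = (a,0)$ and let $J := 0 \ltimes E$, a proper ideal of $B$. Then: (1) $J \not\subseteq f(A)$; (2) $f(\mathrm{Reg}(A)) \neq \mathrm{Reg}(B)$; (3) $A$ is not a Prüfer ring; (4) $A \bowtie^f J$ is a Prüfer ring.
   Context: All rings are commutative with identity. For an $A$-module $E$, the trivial ring extension $A\ltimes E$ is the ring $A\times E$ with multiplication $(a,e)(a',e')=(aa',ae'+a'e)$. For a ring homomorphism $f:A\to B$ and an ideal $J$ of $B$, $A \bowtie^f J := \{(a, f(a)+j) : a \in A, j \in J\}$, a subring of $A\times B$. $\mathrm{Reg}(R)$ is the set of regular elements (non-zero-divisors) of $R$. An ideal is regular if it contains a regular element. A ring $R$ is a Prüfer ring if every finitely generated regular ideal of $R$ is invertible. *)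

From HB Require Import structures.
From mathcomp Require Import all_boot all_algebra.
Set Implicit Arguments. Unset Strict Implicit. Unset Printing Implicit Defensive.
Import GRing.Theory.
Local Open Scope ring_scope.

Section TrivExt.
Variables (A : comNzRingType) (E : lmodType A).

Definition triv_ext : Type := (A * E)%type.
HB.instance Definition _ := GRing.Zmodule.on triv_ext.

Definition te_one : triv_ext := (1, 0).
Definition te_mul (x y : triv_ext) : triv_ext :=
  (x.1 * y.1, x.1 *: y.2 + y.1 *: x.2).

Fact te_mulA : associative te_mul.
Proof.
move=> [a e] [b f] [c g]; rewrite /te_mul /=; congr pair; first by rewrite mulrA.
rewrite !scalerDr !scalerA -!addrA; congr (_ + _).
by rewrite [c * a]mulrC [c * b]mulrC.
Qed.

Fact te_mulC : commutative te_mul.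
Proof. by move=> [a e] [b f]; rewrite /te_mul /= mulrC addrC. Qed.

Fact te_mul1 : left_id te_one te_mul.
Proof. by move=> [a e]; rewrite /te_mul /= mul1r scaler0 scale1r addr0. Qed.

Fact te_mulDl : left_distributive te_mul +%R.
Proof.
move=> [a e] [b f] [c g]; rewrite /te_mul /=; congr pair; first by rewrite mulrDl.
by rewrite scalerDl scalerDr !addrA; congr (_ + _); rewrite -!addrA; congr (_ + _);
  rewrite addrC.
Qed.

Fact te_one_neq0 : te_one != 0.
Proof. by rewrite /te_one xpair_eqE oner_eq0. Qed.

HB.instance Definition _ := GRing.Zmodule_isComNzRing.Build triv_ext
  te_mulA te_mulC te_mul1 te_mulDl te_one_neq0.

End TrivExt.

(* Ring-theoretic notions, stated relative to a subring S of a          *)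
(* commutative ring T (S given as a predicate); for a ring R itself     *)
(* take S := fun _ => True.                                             *)
Section SubringNotions.
Variables (T : comNzRingType) (S : T -> Prop).

Definition regular_in (x : T) : Prop :=
  S x /\ forall y, S y -> x * y = 0 -> y = 0.

Definition ideal_in (I : T -> Prop) : Prop :=
  (forall x, I x -> S x) /\ I 0 /\ (forall x y, I x -> I y -> I (x + y)) /\
  (forall r x, S r -> I x -> I (r * x)).

Definition gen_ideal_in (s : seq T) (x : T) : Prop :=
  exists c : nat -> T, (forall i, S (c i)) /\ x = \sum_(i < size s) c i * s`_i.

Definition prod_ideal (I J : T -> Prop) (x : T) : Prop :=
  exists (n : nat) (u v : nat -> T),
    (forall i, I (u i) /\ J (v i)) /\ x = \sum_(i < n) u i * v i.

(* I is invertible: there is a fractional ideal I' (in the total ring of *)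
(* fractions) with I I' = S.  Written, without fractions, as: there are  *)
(* an ideal J of S and a regular d with I J = d S  (I' = d^-1 J).        *)
Definition invertible_in (I : T -> Prop) : Prop :=
  exists (J : T -> Prop) (d : T), ideal_in J /\ regular_in d /\
    forall x, prod_ideal I J x <-> exists r, S r /\ x = d * r.

Definition prufer_in : Prop :=
  forall s : seq T, (forall i, (i < size s)%N -> S s`_i) ->
    (exists x, gen_ideal_in s x /\ regular_in x) ->
    invertible_in (gen_ideal_in s).

End SubringNotions.

Definition regular (R : comNzRingType) (x : R) := regular_in (fun _ => True) x.
Definition prufer_ring (R : comNzRingType) := prufer_in (fun _ : R => True).

Definition local_ring (A : comUnitRingType) : Prop :=
  forall x y : A, x \isn't a GRing.unit -> y \isn't a GRing.unit ->
    x + y \isn't a GRing.unit.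

(* valuation domain: for a, b <> 0, a/b or b/a lies in A, i.e. a | b or b | a *)
Definition valuation_domain (A : idomainType) : Prop :=
  forall a b : A, (exists c, b = c * a) \/ (exists c, a = c * b).

Definition amalg (A B : comNzRingType) (f : A -> B) (J : B -> Prop)
  (x : A * B) : Prop :=
  exists a j, J j /\ x = (a, f a + j).

(* Local domain, Prüfer => valuation: invert the ideal (a, b) of a local
   domain as I J = d A and write d = a al + b be with al, be in J.  Then
   a al = d r1 and b be = d r2 with r1 + r2 = 1, so one of r1, r2 is a unit;
   if r1 is, then b al = d s gives b r1 = a s, i.e. a | b (symmetrically
   b | a).  In A ⋈ (0 ⋉ E) an element (a, (a, e)) with a in m is a
   zero-divisor, killing (0, (0, e0)) for any nonzero e0 in E = A/m; so every
   regular element has a unit first coordinate, is then a unit, and the only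
   regular ideal is the whole ring. *)
From HB Require Import structures.
From mathcomp Require Import all_boot all_algebra.
From mathcomp Require Import ring.
Set Implicit Arguments. Unset Strict Implicit. Unset Printing Implicit Defensive.
Import GRing.Theory.
Local Open Scope ring_scope.

Lemma regular_of_mul_eq1 (R : comNzRingType) (x x' : R) : x * x' = 1 -> regular x.
Proof.
move=> xx'1; split=> // y _ xy0.
by rewrite -[y]mul1r -xx'1 mulrAC xy0 mul0r.
Qed.

Section TrivExtMul.
Variables (A : comNzRingType) (E : lmodType A).

Lemma te_mulE (x y : triv_ext E) : x * y = (x.1 * y.1, x.1 *: y.2 + y.1 *: x.2).
Proof. by []. Qed.

Lemma te_mul1N (e : E) : ((1, e) : triv_ext E) * (1, - e) = 1.
Proof. by rewrite te_mulE /= mulr1 !scale1r addNr. Qed.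

End TrivExtMul.

Section RegularUnits.
Variables (T : comNzRingType) (S : T -> Prop).
Hypotheses (S0 : S 0) (S1 : S 1) (SD : forall x y, S x -> S y -> S (x + y))
  (SM : forall x y, S x -> S y -> S (x * y)).

Lemma sum_in (n : nat) (F : 'I_n -> T) : (forall i, S (F i)) -> S (\sum_(i < n) F i).
Proof. by move=> SF; apply: big_ind. Qed.

Lemma gen_ideal_in_sub (s : seq T) (x : T) : (forall i, (i < size s)%N -> S s`_i) ->
  gen_ideal_in S s x -> S x.
Proof. by move=> Ss [c [Sc ->]]; apply: sum_in => i; apply: SM (Ss _ (ltn_ord i)). Qed.

Hypothesis regular_unit : forall w, regular_in S w -> exists2 w', S w' & w * w' = 1.

Lemma prufer_in_of_regular_unit : prufer_in S.
Proof.
move=> s Ss [w [Iw regw]]; have [w' Sw' ww'] := regular_unit regw.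
exists S, 1; split; first by [].
split; first by split=> // y _; rewrite mul1r.
move=> x; split.
- move=> [n [u [v [Iuv ->]]]]; exists (\sum_(i < n) u i * v i); rewrite mul1r.
  split=> //; apply: sum_in => i; have [/(gen_ideal_in_sub Ss) Su Sv] := Iuv i.
  exact: SM.
- move=> [r [Sr ->]]; exists 1%N, (fun _ => w), (fun _ => w' * r).
  by rewrite big_ord1 mulrA ww' mul1r; split=> // _; split=> //; apply: SM.
Qed.

End RegularUnits.

Section LocalPrufer.
Variable A : idomainType.

Lemma local_unitD (hloc : local_ring A) (x y : A) :
  x + y \is a GRing.unit -> (x \is a GRing.unit) || (y \is a GRing.unit).
Proof. by apply: contraLR; rewrite negb_or => /andP[]; apply: hloc. Qed.

Lemma gen_ideal2P (a b x : A) :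
  gen_ideal_in (fun _ => True) [:: a; b] x <-> exists u v, x = u * a + v * b.
Proof.
split=> [[c [_ ->]] | [u [v ->]]].
  by exists (c 0%N), (c 1%N); rewrite !big_ord_recr big_ord0 /= add0r.
exists (fun i => if i == 0%N then u else v); split=> //.
by rewrite !big_ord_recr big_ord0 /= add0r.
Qed.

Lemma prod_ideal_mul (I J : A -> Prop) (x y : A) : I x -> J y -> prod_ideal I J (x * y).
Proof. by move=> Ix Jy; exists 1%N, (fun _ => x), (fun _ => y); rewrite big_ord1. Qed.

Lemma prod_ideal_gen2 (a b : A) (J : A -> Prop) (x : A) :
  ideal_in (fun _ => True) J ->
  prod_ideal (gen_ideal_in (fun _ => True) [:: a; b]) J x ->
  exists al be, [/\ J al, J be & x = a * al + b * be].
Proof.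
move=> [_ [J0 [JD JM]]] [n [u [v [Iuv ->]]]].
elim: n => [|n [al [be [Jal Jbe IHE]]]].
  by exists 0, 0; rewrite big_ord0 !mulr0 addr0.
have [/gen_ideal2P [p [q uE]] Jv] := Iuv n.
exists (al + p * v n), (be + q * v n); rewrite big_ord_recr /= IHE uE.
by split; [apply: JD (JM _ _ I Jv) | apply: JD (JM _ _ I Jv) | ring].
Qed.

Lemma dvd_of_unit_ratio (a b al d r s : A) : d != 0 -> r \is a GRing.unit ->
  a * al = d * r -> b * al = d * s -> exists c, b = c * a.
Proof.
move=> d0 ur aal bal.
have : a * al != 0.
  by rewrite aal mulf_neq0 //; apply: contraTneq ur => ->; rewrite unitr0.
rewrite mulf_eq0 negb_or => /andP[_ al0].
have bra : b * r = a * s.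
  by apply: (mulIf al0); rewrite mulrAC bal [RHS]mulrAC aal mulrAC.
by exists (s / r); rewrite -[b](mulrK ur) bra; ring.
Qed.

Lemma local_prufer_valuation : local_ring A -> prufer_ring A -> valuation_domain A.
Proof.
move=> hloc hpr a b.
have [->|a0] := eqVneq a 0; first by right; exists 0; rewrite mul0r.
have Ia : gen_ideal_in (fun _ => True) [:: a; b] a.
  by apply/gen_ideal2P; exists 1, 0; rewrite mul1r mul0r addr0.
have Ib : gen_ideal_in (fun _ => True) [:: a; b] b.
  by apply/gen_ideal2P; exists 0, 1; rewrite mul1r mul0r add0r.
have rega : regular a.
  by split=> // y _ /eqP; rewrite mulf_eq0 (negbTE a0) => /eqP.
have [J [d [HJ [[_ regd] Heq]]]] :=
  hpr [:: a; b] (fun _ _ => I) (ex_intro _ a (conj Ia rega)).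
have d0 : d != 0.
  by apply: contra_neq (oner_neq0 A) => d0; apply: regd => //; rewrite d0 mul0r.
have /Heq/(prod_ideal_gen2 HJ) [al [be [Jal Jbe dE]]] : exists r, True /\ d = d * r.
  by exists 1; rewrite mulr1.
have inD x y : gen_ideal_in (fun _ => True) [:: a; b] x -> J y ->
    exists r, x * y = d * r.
  by move=> Ix Jy; have [r [_ ->]] := proj1 (Heq _) (prod_ideal_mul Ix Jy); exists r.
have [[r1 aal] [r2 bbe]] := (inD _ _ Ia Jal, inD _ _ Ib Jbe).
have [[s1 bal] [s2 abe]] := (inD _ _ Ib Jal, inD _ _ Ia Jbe).
have r12 : r1 + r2 = 1 by apply: (mulfI d0); rewrite mulrDr -aal -bbe -dE mulr1.
have /orP[ur1 | ur2] : (r1 \is a GRing.unit) || (r2 \is a GRing.unit).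
  by apply: (local_unitD hloc); rewrite r12 unitr1.
- by left; apply: dvd_of_unit_ratio d0 ur1 aal bal.
- by right; apply: dvd_of_unit_ratio d0 ur2 bbe abe.
Qed.

End LocalPrufer.

Section Amalgamation.
Variables (A : comUnitRingType) (E : lmodType A) (e0 : E).
Hypotheses (e0_neq0 : e0 != 0)
  (nonunit_ann : forall a, a \isn't a GRing.unit -> a *: e0 = 0).

Local Notation D :=
  (amalg (fun a : A => (a, 0) : triv_ext E) (fun b : triv_ext E => b.1 = 0)).

Lemma amalgP (x : A * triv_ext E) : D x <-> x.2.1 = x.1.
Proof.
split=> [[a [j [j1 ->]]] | ]; first by rewrite /= j1 addr0.
case: x => [a [a' e]] /= ->; exists a, (0, e); split=> //=.
by congr pair; exact: (esym (f_equal2 pair (addr0 a) (add0r e))).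
Qed.

Lemma amalg_regular_unit w : regular_in D w -> exists2 w', D w' & w * w' = 1.
Proof.
case: w => [a [a' e]] [/amalgP /= -> regw].
have ua : a \is a GRing.unit.
  apply: contraT => /nonunit_ann ae0.
  have : ((a, (a, e)) : A * triv_ext E) * (0, (0, e0)) = 0.
    apply/eqP; rewrite xpair_eqE /= te_mulE xpair_eqE /= ae0.
    by rewrite !mulr0 scale0r addr0 !eqxx.
  move/(regw _ (proj2 (amalgP (0, (0, e0))) erefl))/eqP; rewrite !xpair_eqE /=.
  by rewrite !eqxx (negbTE e0_neq0).
exists (a^-1, (a^-1, - (a^-1 * a^-1) *: e)); first exact/amalgP.
apply/eqP; rewrite xpair_eqE /= te_mulE xpair_eqE /= mulrV //.
by rewrite scalerA mulrN mulrA mulrV // mul1r scaleNr addNr !eqxx.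
Qed.

Lemma amalg_prufer : prufer_in D.
Proof.
apply: prufer_in_of_regular_unit amalg_regular_unit.
1,2: exact/amalgP.
all: by move=> x y /amalgP Hx /amalgP Hy; apply/amalgP; rewrite /= Hx Hy.
Qed.

End Amalgamation.

Theorem mainTheorem7 (A : idomainType) (E : lmodType A) (pi : A -> E)
  (hloc : local_ring A) (hnval : ~ valuation_domain A)
  (hpiD : forall x y, pi (x + y) = pi x + pi y)
  (hpiZ : forall a x, pi (a * x) = a *: pi x)
  (hpi_surj : forall e, exists x, pi x = e)
  (hpi_ker : forall x, pi x = 0 <-> x \isn't a GRing.unit) :
  let B := triv_ext E in
  let f : A -> B := fun a => (a, 0) in
  let J : B -> Prop := fun b => b.1 = 0 in
  [/\ ~ (forall b, J b -> exists a, f a = b),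
      ~ (forall b : B, (exists a, regular a /\ f a = b) <-> regular b),
      ~ prufer_ring A
    & prufer_in (amalg f J)].
Proof.
move=> B f J.
have pi1_neq0 : pi 1 != 0 by apply/eqP => /hpi_ker; rewrite unitr1.
have ann a : a \isn't a GRing.unit -> a *: pi 1 = 0.
  by move=> /hpi_ker; rewrite -hpiZ mulr1.
split.
- move=> /(_ (0, pi 1) erefl) [a /(congr1 snd) /= /esym/eqP].
  exact/negP.
- move=> /(_ (1, pi 1)) /iffRL /(_ (regular_of_mul_eq1 (te_mul1N (pi 1)))).
  move=> [a [_ /(congr1 snd) /= /esym/eqP]]; exact/negP.
- by move=> /(local_prufer_valuation hloc).
- exact: amalg_prufer pi1_neq0 ann.
Qed.
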